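(* Let $q\in\mathbb{N}$, let $\psi$ be a primitive Dirichlet character mod $q_0$ with $q_0\mid q$, and let $f$ be a $q$-periodic arithmetical function with $f\in E_{q,\psi}$. Then $$f(n)=\sum_{d\mid\frac q{q_0}}g(d)\,\tau\big(n,\overline{\psi_{q/d}}\big),\qquad n=1,2,\dots,$$ where $g=\mathcal{T}f$.
   Context: A Dirichlet character mod $m$ is a completely multiplicative $m$-periodic function with $\chi(n)\ne0$ iff $\gcd(n,m)=1$; primitive means not induced (in the sense $\chi=\psi'\chi_m$, $\chi_m$ principal) by a character of modulus a proper divisor. $\psi_{q/d}=\psi\chi_{q/d}$ is the character mod $\frac qd$ induced by $\psi$. For a character $\chi$ mod $m$, the Gauss sum is $\tau(n,\chi)=\sum_{k=1}^m\chi(k)e^{2\pi ikn/m}$. For $d\mid q$ and a character $\chi$ mod $\frac qd$, $\xi_\chi(n)=\chi(\frac nd)$ if $d\mid n$, $0$ otherwise; $E_{q,\psi}$ is the span of $\{\xi_{\psi_{q/d}}:d\mid\frac q{q_0}\}$. For $q$-periodic $f$, $(\mathcal{T}f)(m)=\frac1q\sum_{n=1}^qe^{-2\pi imn/q}f(n)$. *)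

From mathcomp Require Import all_boot all_algebra.
From mathcomp Require Import complex.
From mathcomp Require Import reals trigo.
Set Implicit Arguments.
Unset Strict Implicit.
Unset Printing Implicit Defensive.
Import GRing.Theory Num.Theory.
Local Open Scope ring_scope.
Local Open Scope complex_scope.

Section Defs.
Variable R : realType.
Local Notation C := R[i].

Definition expi2pi (x : R) : C := cos (2 * pi * x) +i* sin (2 * pi * x).

Definition ekm (k n m : nat) : C := expi2pi ((k * n)%:R / m%:R).
Definition ekm_neg (k n m : nat) : C := expi2pi (- ((k * n)%:R / m%:R)).

Definition dirichlet_char (m : nat) (chi : nat -> C) : Prop :=
  [/\ chi 1%N = 1,
      (forall a b : nat, chi (a * b)%N = chi a * chi b),
      (forall n : nat, chi (n + m)%N = chi n) &
      (forall n : nat, chi n != 0 <-> coprime n m)].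

Definition principal_char (m : nat) : nat -> C :=
  fun n => if coprime n m then 1 else 0.

Definition induced_by (m : nat) (chi : nat -> C) (m' : nat) (psi' : nat -> C) :=
  dirichlet_char m' psi' /\ forall n, chi n = psi' n * principal_char m n.

Definition primitive_char (m : nat) (chi : nat -> C) : Prop :=
  dirichlet_char m chi /\
  forall m' (psi' : nat -> C), (m' %| m)%N -> (m' < m)%N ->
    ~ induced_by m chi m' psi'.

(* psi_{q/d} = psi * chi_{q/d}, the character mod q/d induced by psi *)
Definition induced_char (psi : nat -> C) (m : nat) : nat -> C :=
  fun n => psi n * principal_char m n.

Definition gauss_sum (m : nat) (n : nat) (chi : nat -> C) : C :=
  \sum_(1 <= k < m.+1) chi k * ekm k n m.

Definition conj_fun (chi : nat -> C) : nat -> C := fun n => (chi n)^*.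

Definition xi (d : nat) (chi : nat -> C) : nat -> C :=
  fun n => if (d %| n)%N then chi (n %/ d)%N else 0.

Definition in_E (q q0 : nat) (psi : nat -> C) (f : nat -> C) : Prop :=
  exists c : nat -> C, forall n : nat,
    f n = \sum_(d <- divisors (q %/ q0)) c d * xi d (induced_char psi (q %/ d)) n.

Definition periodic_nat (q : nat) (f : nat -> C) : Prop :=
  forall n : nat, f (n + q)%N = f n.

Definition Tq (q : nat) (f : nat -> C) (m : nat) : C :=
  (q%:R)^-1 * \sum_(1 <= n < q.+1) ekm_neg m n q * f n.

End Defs.

From mathcomp Require Import all_boot all_order all_algebra.
From mathcomp Require Import complex.
From mathcomp Require Import reals trigo.
From mathcomp Require Import cyclic zify ring lra.
Import Order.TTheory GRing.Theory Num.Theory.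
Set Implicit Arguments. Unset Strict Implicit. Unset Printing Implicit Defensive.

(* Membership in E_{q,psi} makes f twisted-multiplicative, f(un) = psi(u) f(n)
   for u coprime to q, so g = T f satisfies g(m) = psi(u) g(mu).  If
   gcd(m,q) does not divide q/q0, the units u = 1 (mod q/gcd(m,q)) fix m
   modulo q, and modulo q0 they cover every unit = 1 modulo a proper divisor
   of q0; since psi is primitive it is not trivial on those, so g(m) = 0.  For
   d | q/q0 and k coprime to q/d one gets g(dk) = conj(psi k) g(d).  Grouping
   the Fourier inversion f(n) = sum_m g(m) e(mn/q) by d = gcd(m,q) then
   produces the Gauss sums tau(n, conj psi_{q/d}). *)

Section Periodic.
Variables (T : Type) (m : nat) (F : nat -> T).
Hypothesis F_per : forall n, F (n + m) = F n.

Lemma periodicDM n k : F (n + k * m) = F n.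
Proof.
elim: k => [|k IHk]; first by rewrite mul0n addn0.
by rewrite mulSn addnCA addnC F_per IHk.
Qed.

Lemma periodic_mod n : F (n %% m) = F n.
Proof. by rewrite {2}(divn_eq n m) addnC periodicDM. Qed.

Lemma periodic_eqmod a b : a = b %[mod m] -> F a = F b.
Proof. by move=> eq_ab; rewrite -periodic_mod eq_ab periodic_mod. Qed.

End Periodic.

Lemma exists_modn_inv u q : 0 < q -> coprime u q -> exists v, v * u = 1 %[mod q].
Proof.
move=> q_gt0 co_uq; exists (u ^ (totient q).-1).
by rewrite -expnSr prednK ?totient_gt0 // Euler_exp_totient.
Qed.

Definition coprime_lift (A B k : nat) :=
  k + (\prod_(p <- primes B | ~~ (p %| k)) p) * A.

Lemma coprime_lift_mod A B k : coprime_lift A B k = k %[mod A].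
Proof. by rewrite /coprime_lift addnC modnMDl. Qed.

(* A prime of [B] dividing [k] divides neither [A] nor the product; one not
   dividing [k] divides the product. *)
Lemma coprime_lift_coprime A B k :
  coprime k A -> 0 < B -> coprime (coprime_lift A B k) B.
Proof.
rewrite /coprime_lift; set P := \prod_(_ <- _ | _) _ => co_kA B_gt0.
apply/negPn/negP => nco; have /pdivP[p p_pr p_dvd] : 1 < gcdn (k + P * A) B.
  by rewrite ltn_neqAle eq_sym nco gcdn_gt0 B_gt0 orbT.
have p_x := dvdn_trans p_dvd (dvdn_gcdl _ _).
have p_B := dvdn_trans p_dvd (dvdn_gcdr _ _).
have [p_k | p_nk] := boolP (p %| k).
  have p_nA : ~~ (p %| A).
    apply: contraL p_pr => p_A; have : p %| gcdn k A by rewrite dvdn_gcd p_k.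
    by rewrite (eqP co_kA) dvdn1 => /eqP->.
  move: p_x; rewrite dvdn_addr // Euclid_dvdM // (negbTE p_nA) orbF.
  rewrite Euclid_dvd_prod // big_has_cond => /hasP[r]; rewrite mem_primes.
  case/and3P=> r_pr _ _ /andP[r_nk]; rewrite dvdn_prime2 // => /eqP p_r.
  by rewrite -p_r p_k in r_nk.
have p_P : p %| P.
  rewrite /P big_mkcond (bigD1_seq p) ?primes_uniq ?mem_primes ?p_pr ?B_gt0 //=.
  by rewrite p_nk dvdn_mulr.
by move: p_x; rewrite dvdn_addl ?dvdn_mulr // (negbTE p_nk).
Qed.

Lemma exists_coprime_crt h q0 B a : 0 < h -> 0 < q0 -> 0 < B ->
  coprime a q0 -> a = 1 %[mod gcdn h q0] ->
  exists2 u, coprime u B & u = 1 %[mod h] /\ u = a %[mod q0].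
Proof.
move=> h_gt0 q0_gt0 B_gt0 co_a a1; set g := gcdn h q0.
have [x y bezout _] := egcdnP q0 h_gt0.
have [s def_a] : exists s, a + q0 = 1 + s * g.
  have /dvdnP[s def_s] : g %| a + q0 - 1.
    rewrite -eqn_mod_dvd; last by rewrite addn_gt0 q0_gt0 orbT.
    by rewrite -modnDmr (eqP (dvdn_gcdr h q0)) addn0 a1.
  by exists s; rewrite -def_s subnKC // addn_gt0 q0_gt0 orbT.
set u1 := 1 + s * x * h.
have u1_h : u1 = 1 %[mod h] by rewrite /u1 addnC modnMDl.
have u1_q0 : u1 = a %[mod q0].
  have -> : u1 = (1 + s * y) * q0 + a.
    by rewrite /u1 -mulnA bezout mulnDr addnCA -def_a; ring.
  exact: modnMDl.
have co_u1 : coprime u1 (h * q0).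
  rewrite coprimeMr -coprime_modl u1_h coprime_modl coprime1n.
  by rewrite -coprime_modl u1_q0 coprime_modl.
exists (coprime_lift (h * q0) B u1); first exact: coprime_lift_coprime.
have lift_mod d : d %| h * q0 -> coprime_lift (h * q0) B u1 = u1 %[mod d].
  by move=> d_dvd; rewrite -(modn_dvdm _ d_dvd) coprime_lift_mod modn_dvdm.
by split; rewrite lift_mod //; [exact/dvdn_mulr/dvdnn | exact/dvdn_mull/dvdnn].
Qed.

Local Open Scope ring_scope.

Lemma sum_periodic_shift1 (V : zmodType) m (F : nat -> V) :
  (forall n, F (n + m)%N = F n) -> \sum_(1 <= i < m.+1) F i = \sum_(i < m) F i.
Proof.
move=> F_per; rewrite -(big_mkord xpredT); apply: (addrI (F 0%N)).
have F_m : F m = F 0%N by rewrite -[in LHS](add0n m) F_per.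
by rewrite -big_ltn // big_nat_recr //= F_m addrC.
Qed.

Lemma sum_dvdn_nat (V : nmodType) (G : nat -> V) d r : (0 < d)%N ->
  \sum_(1 <= n < (d * r).+1) (if (d %| n)%N then G n else 0) =
  \sum_(1 <= k < r.+1) G (d * k)%N.
Proof.
move=> d_gt0; elim: r => [|r IHr]; first by rewrite muln0 !big_geq.
rewrite [in RHS]big_nat_recr //= mulnSr (@big_cat_nat _ _ _ (d * r).+1) ?leq_addr //=.
rewrite IHr; congr (_ + _).
rewrite big_nat_recr /=; last by rewrite -{1}[(d * r)%N]addn0 ltn_add2l.
rewrite (dvdn_addl _ (dvdnn d)) (dvdn_mulr _ (dvdnn d)) big_nat_cond big1 ?add0r //.
move=> n /andP[/andP[lo hi] _].
case: ifP => // /dvdnP[k def_n]; move: lo hi.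
by rewrite def_n (mulnC k) -mulnSr !ltn_pmul2l //; lia.
Qed.

Lemma sum_if_eq_seq (T : eqType) (V : nmodType) (s : seq T) (g : T) (x : V) :
  uniq s -> (g \notin s -> x = 0) -> \sum_(d <- s) (if g == d then x else 0) = x.
Proof.
move=> s_uniq x0; have [g_in | g_nin] := boolP (g \in s); last first.
  by rewrite x0 // big1 // => d _; case: ifP.
rewrite -big_mkcond -big_filter (eq_filter (fun d => eq_sym g d)).
by rewrite filter_pred1_uniq // big_seq1.
Qed.

Section Expi2pi.
Variable R : realType.

Lemma expi2piD (x y : R) : expi2pi (x + y) = expi2pi x * expi2pi y.
Proof.
rewrite /expi2pi mulrDr cosD sinD.
by apply/eqP; rewrite eq_complex /= !eqxx /= addrC eqxx.
Qed.

Lemma expi2pi0 : expi2pi (0 : R) = 1.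
Proof. by rewrite /expi2pi mulr0 cos0 sin0. Qed.

Lemma expi2piMn (n : nat) (x : R) : expi2pi (n%:R * x) = expi2pi x ^+ n.
Proof.
elim: n => [|n IHn]; first by rewrite mul0r expi2pi0 expr0.
by rewrite -addn1 natrD mulrDl mul1r expi2piD IHn exprD expr1.
Qed.

Lemma expi2pi_nat (n : nat) : expi2pi (n%:R : R) = 1.
Proof.
have e1 : expi2pi (1 : R) = 1 by rewrite /expi2pi mulr1 mulr_natl cos2pi sin2pi.
by rewrite -[n%:R]mulr1 expi2piMn e1 expr1n.
Qed.

Lemma expi2piDn (x : R) (n : nat) : expi2pi (x + n%:R) = expi2pi x.
Proof. by rewrite expi2piD expi2pi_nat mulr1. Qed.

Lemma expi2piBn (x : R) (n : nat) : expi2pi (x - n%:R) = expi2pi x.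
Proof. by rewrite -(expi2piDn _ n) subrK. Qed.

Lemma expi2pi_neq1 (t : R) : 0 < t < 1 -> expi2pi t != 1.
Proof.
move=> /andP[t_gt0 t_lt1]; apply/negP => /eqP/eqP.
rewrite /expi2pi eq_complex /= => /andP[/eqP cos_1 _].
have pi_gt0 := pi_gt0 R.
have cos_eq1 (y : R) : 0 <= y <= pi -> cos y = 1 -> y = 0.
  move=> y_itv cos_y; apply: (@cos_inj R y 0).
  - by rewrite in_itv.
  - by rewrite in_itv /= lexx pi_ge0.
  - by rewrite cos_y cos0.
have tpt_gt0 : 0 < 2 * pi * t by rewrite !mulr_gt0.
have [le_pi | lt_pi] := lerP (2 * pi * t) pi.
  suff : 2 * pi * t = 0 by move/eqP; rewrite gt_eqF.
  by apply: cos_eq1; rewrite ?le_pi ?ltW.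
suff : 2 * pi - 2 * pi * t = 0.
  by move/eqP; rewrite gt_eqF // -{1}[2 * pi]mulr1 -mulrBr !mulr_gt0 ?subr_gt0 ?ltr0n.
apply: cos_eq1; last first.
  rewrite cosB [in cos _]mulr_natl [in sin _]mulr_natl cos2pi sin2pi.
  by rewrite mul0r addr0 mul1r.
rewrite subr_ge0 ler_piMr ?mulr_ge0 ?ltW //=; lra.
Qed.

Lemma sum_expi2pi_mul (q x : nat) : (0 < q)%N ->
  \sum_(m < q) expi2pi (((m * x)%:R : R) / q%:R) = if (q %| x)%N then q%:R else 0.
Proof.
move=> q_gt0; have q_neq0 : (q%:R : R) != 0 by rewrite pnatr_eq0 -lt0n.
set z := expi2pi ((x%:R : R) / q%:R).
have -> : \sum_(m < q) expi2pi (((m * x)%:R : R) / q%:R) = \sum_(m < q) z ^+ m.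
  by apply: eq_bigr => m _; rewrite natrM -mulrA expi2piMn.
case: ifPn => [/dvdnP[k def_x] | x_ndvd].
  rewrite /z def_x natrM mulfK // expi2pi_nat.
  by rewrite (eq_bigr (fun=> 1)) ?sumr_const ?card_ord // => m _; rewrite expr1n.
have z_q : z ^+ q = 1 by rewrite -expi2piMn mulrC divfK // expi2pi_nat.
have z_neq1 : z != 1.
  rewrite /z {1}(divn_eq x q) natrD natrM mulrDl mulfK // expi2piD expi2pi_nat mul1r.
  apply: expi2pi_neq1; apply/andP; split.
    by rewrite divr_gt0 ?ltr0n // lt0n; exact: x_ndvd.
  by rewrite ltr_pdivrMr ?ltr0n // mul1r ltr_nat ltn_pmod.
have := subrX1 z q; rewrite z_q subrr => /esym/eqP; rewrite mulf_eq0 subr_eq0.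
by rewrite (negbTE z_neq1) => /eqP.
Qed.

End Expi2pi.

Local Open Scope complex_scope.

Section DirichletChar.
Variables (R : realType) (m : nat) (chi : nat -> R[i]).
Hypothesis chi_char : dirichlet_char m chi.

Lemma char1 : chi 1%N = 1.
Proof. by case: chi_char. Qed.

Lemma charM a b : chi (a * b)%N = chi a * chi b.
Proof. by case: chi_char. Qed.

Lemma char_eqmod a b : a = b %[mod m] -> chi a = chi b.
Proof. by case: chi_char => _ _ chi_per _; apply: periodic_eqmod. Qed.

Lemma char_eq0 n : ~~ coprime n m -> chi n = 0.
Proof.
case: chi_char => _ _ _ chi_neq0 n_nco; apply/eqP; apply: contraNT n_nco.
by move/chi_neq0.
Qed.

Lemma char_neq0 n : coprime n m -> chi n != 0.
Proof. by case: chi_char => _ _ _ chi_neq0 /chi_neq0. Qed.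

Hypothesis m_gt0 : (0 < m)%N.

Lemma conjc_charM u : coprime u m -> (chi u)^* * chi u = 1.
Proof.
move=> co_u; have phi_gt0 : (0 < totient m)%N by rewrite totient_gt0.
have chi_phi : chi u ^+ totient m = 1.
  have charX k : chi (u ^ k)%N = chi u ^+ k.
    by elim: k => [|k IHk]; rewrite ?char1 // expnS charM IHk exprS.
  by rewrite -charX -char1; apply: char_eqmod; apply: Euler_exp_totient.
have norm_chi : `|chi u| = 1.
  by apply/eqP; rewrite -(pexpr_eq1 phi_gt0) // -normrX chi_phi normr1.
change (Num.conj (chi u) * chi u = 1).
by rewrite mulrC -normCK norm_chi expr1n.
Qed.

Section TrivialOnKernel.
Variable m1 : nat.
Hypothesis m1_dvd : (m1 %| m)%N.
Hypothesis chi_ker : forall a, coprime a m -> a = 1 %[mod m1] -> chi a = 1.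

Lemma char_eqmod_ker x y :
  coprime x m -> coprime y m -> x = y %[mod m1] -> chi x = chi y.
Proof.
move=> co_x co_y xy; have [v vy] := exists_modn_inv m_gt0 co_y.
have co_v : coprime v m.
  have := coprime1n m.
  by rewrite -coprime_modl -vy coprime_modl coprimeMl => /andP[].
have chi_vy : chi v * chi y = 1 by rewrite -charM -char1; apply: char_eqmod.
have chi_xv : chi (x * v)%N = 1.
  apply: chi_ker; first by rewrite coprimeMl co_x.
  by rewrite mulnC -modnMmr xy modnMmr -(modn_dvdm _ m1_dvd) vy modn_dvdm.
by rewrite -[chi x]mulr1 -chi_vy mulrA -charM chi_xv mul1r.
Qed.

Lemma induced_by_of_ker : exists psi', induced_by m chi m1 psi'.
Proof.
have m1_gt0 : (0 < m1)%N by apply: dvdn_gt0 m1_dvd.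
pose L := coprime_lift m1 m.
have co_L n : coprime n m1 -> coprime (L n) m.
  by move=> co_n; apply: coprime_lift_coprime.
have L_mod n : L n = n %[mod m1] by apply: coprime_lift_mod.
have chi_L n x :
    coprime n m1 -> coprime x m -> n = x %[mod m1] -> chi (L n) = chi x.
  by move=> co_n co_x nx; apply: char_eqmod_ker; rewrite ?co_L // L_mod.
have co_D n : coprime (n + m1) m1 = coprime n m1.
  by rewrite -coprime_modl modnDr coprime_modl.
exists (fun n => if coprime n m1 then chi (L n) else 0); split; [split|].
- by rewrite coprime1n (chi_L 1%N 1%N) ?char1 ?coprime1n.
- move=> a b; rewrite coprimeMl.
  case: (boolP (coprime a m1)) => co_a; case: (boolP (coprime b m1)) => co_b //=;
    rewrite ?mul0r ?mulr0 //.
  rewrite -charM (chi_L _ (L a * L b)) ?coprimeMl ?co_a ?co_b ?co_L //.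
  by rewrite -[in RHS]modnMm !L_mod modnMm.
- move=> n; rewrite co_D; case: ifP => // co_n.
  by rewrite (chi_L _ (L n)) ?co_D ?co_L // modnDr L_mod.
- move=> n; case: ifP => co_n; split=> //; last by rewrite eqxx.
  by move=> _; apply: char_neq0; apply: co_L.
- move=> n; rewrite /principal_char; case: (boolP (coprime n m)) => co_n.
    rewrite (coprime_dvdr m1_dvd co_n) mulr1 (chi_L n n) //.
    exact: coprime_dvdr m1_dvd co_n.
  by rewrite mulr0 char_eq0.
Qed.

End TrivialOnKernel.

End DirichletChar.

Lemma primitive_char_ker (R : realType) m (chi : nat -> R[i]) m1 :
  primitive_char m chi -> (m1 %| m)%N -> (m1 < m)%N ->
  ~ (forall a, coprime a m -> a = 1 %[mod m1] -> chi a = 1).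
Proof.
move=> [chi_char not_induced] m1_dvd m1_lt chi_ker.
have m_gt0 : (0 < m)%N := leq_ltn_trans (leq0n _) m1_lt.
have [psi' ind] := induced_by_of_ker chi_char m_gt0 m1_dvd chi_ker.
exact: not_induced m1_dvd m1_lt ind.
Qed.

Lemma ekm_mulr (R : realType) d k n M : (0 < d)%N ->
  ekm R (d * k) n (M * d) = ekm R k n M.
Proof.
move=> d_gt0; rewrite /ekm -mulnA (mulnC d) !natrM -mulf_div divff ?mulr1 //.
by rewrite pnatr_eq0 -lt0n.
Qed.

Section DiscreteFourier.
Variables (R : realType) (q : nat) (f : nat -> R[i]).
Hypothesis q_gt0 : (0 < q)%N.

Let qR_neq0 : q%:R != 0 :> R.
Proof. by rewrite pnatr_eq0 -lt0n. Qed.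

Lemma ekmDl k n : ekm R (k + q) n q = ekm R k n q.
Proof.
by rewrite /ekm mulnDl natrD mulrDl (mulnC q) (natrM _ n q) mulfK // expi2piDn.
Qed.

Lemma ekm_negDl k n : ekm_neg R (k + q) n q = ekm_neg R k n q.
Proof.
rewrite /ekm_neg mulnDl natrD mulrDl (mulnC q) (natrM _ n q) mulfK //.
by rewrite opprD expi2piBn.
Qed.

Lemma ekm_negDr k n : ekm_neg R k (n + q) q = ekm_neg R k n q.
Proof.
by rewrite /ekm_neg mulnDr natrD mulrDl (natrM _ k q) mulfK // opprD expi2piBn.
Qed.

Lemma TqDn m : Tq q f (m + q) = Tq q f m.
Proof. by congr (_ * _); apply: eq_bigr => n _; rewrite ekm_negDl. Qed.

Lemma Tq_eqmod a b : a = b %[mod q] -> Tq q f a = Tq q f b.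
Proof. by move=> ab; apply: (periodic_eqmod TqDn). Qed.

Hypothesis f_per : periodic_nat q f.

Lemma Tq_ord m : Tq q f m = q%:R^-1 * \sum_(n < q) ekm_neg R m n q * f n.
Proof. by rewrite /Tq sum_periodic_shift1 // => n; rewrite ekm_negDr f_per. Qed.

Lemma Tq_inversion n : f n = \sum_(1 <= m < q.+1) Tq q f m * ekm R m n q.
Proof.
rewrite sum_periodic_shift1 => [|m]; last by rewrite TqDn ekmDl.
have e_prod m (j : 'I_q) :
    ekm_neg R m j q * ekm R m n q = expi2pi (((m * (n + (q - j)))%:R : R) / q%:R).
  have j_le : (j <= q)%N := ltnW (ltn_ord j).
  rewrite /ekm_neg /ekm -expi2piD -(expi2piDn _ m); congr expi2pi.
  by rewrite mulnDr mulnBr natrD natrB ?leq_mul2l ?j_le ?orbT // !natrM; field.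
have dvd_shift (j : 'I_q) : (q %| n + (q - j))%N = (j == n %% q :> nat)%N.
  have j_le : (j <= q)%N := ltnW (ltn_ord j).
  rewrite {1}(divn_eq n q) -addnA dvdn_addr ?dvdn_mull // addnBA //.
  rewrite -eqn_mod_dvd; last exact: leq_trans j_le (leq_addl _ _).
  by rewrite modnDr modn_mod (modn_small (ltn_ord j)) eq_sym.
have qC_neq0 : q%:R != 0 :> R[i] by rewrite pnatr_eq0 -lt0n.
rewrite (eq_bigr (fun m : 'I_q =>
    q%:R^-1 * \sum_(j < q) f j * (ekm_neg R m j q * ekm R m n q))); last first.
  move=> m _; rewrite Tq_ord -mulrA mulr_suml; congr (_ * _).
  by apply: eq_bigr => j _; rewrite mulrAC mulrC.
rewrite -mulr_sumr exchange_big /=.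
rewrite (eq_bigr (fun j : 'I_q => if (j == n %% q :> nat)%N then f j * q%:R else 0)).
  rewrite -big_mkcond /= -(big_mkord (fun j => j == n %% q)%N (fun j => f j * q%:R)).
  by rewrite big_nat1_eq ltn_pmod // mulrCA mulVf // mulr1 (periodic_mod f_per).
move=> j _; under eq_bigr => m _ do rewrite e_prod.
rewrite -mulr_sumr sum_expi2pi_mul //.
by rewrite dvd_shift; case: ifP; rewrite ?mulr0.
Qed.

End DiscreteFourier.

Lemma divisors_divnP q q0 d : (0 < q)%N -> (q0 %| q)%N ->
  d \in divisors (q %/ q0) -> (d %| q)%N /\ (q0 %| q %/ d)%N.
Proof.
move=> q_gt0 q0_dvd; rewrite -dvdn_divisors => [d_dvd|]; last first.
  by rewrite divn_gt0 ?(dvdn_gt0 q_gt0 q0_dvd) // dvdn_leq.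
have d_dvd_q := dvdn_trans d_dvd (dvdn_div q0_dvd).
by split; rewrite // dvdn_divRL // mulnC -dvdn_divRL.
Qed.

Lemma in_E_twisted (R : realType) q q0 (psi f : nat -> R[i]) :
  (0 < q)%N -> (q0 %| q)%N -> dirichlet_char q0 psi -> in_E q q0 psi f ->
  forall u n, coprime u q -> f (u * n)%N = psi u * f n.
Proof.
move=> q_gt0 q0_dvd psi_char [c def_f] u n co_u.
rewrite !def_f mulr_sumr; apply: eq_big_seq => d.
move=> /(divisors_divnP q_gt0 q0_dvd)[d_dvd _].
have co_ud : coprime u (q %/ d) := coprime_dvdr (dvdn_div d_dvd) co_u.
have co_du : coprime d u by rewrite coprime_sym (coprime_dvdr d_dvd co_u).
rewrite mulrCA /xi Gauss_dvdr //.
case: ifP => d_n; last by rewrite !mulr0.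
rewrite -muln_divA // /induced_char /principal_char (charM psi_char) coprimeMl co_ud.
by case: ifP; rewrite ?mulr0 ?mulr1 // mulrA.
Qed.

Section Twisted.
Variables (R : realType) (q q0 : nat) (psi f : nat -> R[i]).
Hypotheses (q_gt0 : (0 < q)%N) (f_per : periodic_nat q f).
Hypothesis f_twist : forall u n, coprime u q -> f (u * n)%N = psi u * f n.

Lemma Tq_twist u m : coprime u q -> Tq q f m = psi u * Tq q f (m * u).
Proof.
move=> co_u; rewrite !Tq_ord // mulrCA; congr (_ * _).
pose F n := ekm_neg R m n q * f n.
have F_per n : F (n + q)%N = F n by rewrite /F ekm_negDr // f_per.
pose mul_u (i : 'I_q) : 'I_q := Ordinal (ltn_pmod (u * i) q_gt0).
have mul_u_inj : injective mul_u.
  have [v vu] := exists_modn_inv q_gt0 co_u.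
  move=> i j /(congr1 val) /= uij; apply: val_inj => /=.
  rewrite -(modn_small (ltn_ord i)) -(modn_small (ltn_ord j)) -(mul1n i) -(mul1n j).
  rewrite -modnMml -vu modnMml -mulnA -modnMmr uij modnMmr mulnA.
  by rewrite -modnMml vu modnMml.
rewrite (reindex_inj mul_u_inj) mulr_sumr; apply: eq_bigr => i _ /=.
have := periodic_mod F_per (u * i); rewrite /F => ->.
by rewrite f_twist // mulrCA /ekm_neg mulnA.
Qed.

Hypotheses (q0_dvd : (q0 %| q)%N) (psi_char : dirichlet_char q0 psi).

Let q0_gt0 : (0 < q0)%N := dvdn_gt0 q_gt0 q0_dvd.

Lemma Tq_mul_coprime d k :
  (d %| q)%N -> (q0 %| q %/ d)%N -> coprime k (q %/ d) ->
  Tq q f (d * k) = (psi k)^* * Tq q f d.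
Proof.
move=> d_dvd q0_dvd_qd co_k; have d_gt0 : (0 < d)%N := dvdn_gt0 q_gt0 d_dvd.
have qd_gt0 : (0 < q %/ d)%N by rewrite divn_gt0 // dvdn_leq.
set u := coprime_lift (q %/ d) q k.
have co_u : coprime u q by apply: coprime_lift_coprime.
have u_k : u = k %[mod q %/ d] := coprime_lift_mod _ _ _.
have u_k0 : u = k %[mod q0] by rewrite -(modn_dvdm u q0_dvd_qd) u_k modn_dvdm.
have du_dk : (d * u = d * k %[mod q])%N.
  by rewrite -(divnK d_dvd) (mulnC (q %/ d)%N) -(muln_modr d u) u_k muln_modr.
have Tdu : Tq q f (d * u) = Tq q f (d * k) by apply: Tq_eqmod.
rewrite (Tq_twist d co_u) Tdu.
have co_k0 : coprime k q0 := coprime_dvdr q0_dvd_qd co_k.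
rewrite (char_eqmod psi_char u_k0) mulrA.
by rewrite (conjc_charM psi_char q0_gt0 co_k0) mul1r.
Qed.

Lemma Tq_eq0 m :
  primitive_char q0 psi -> ~~ (gcdn m q %| q %/ q0)%N -> Tq q f m = 0.
Proof.
move=> psi_prim; apply: contraNeq => Tm_neq0.
set e := gcdn m q; have e_gt0 : (0 < e)%N by rewrite gcdn_gt0 q_gt0 orbT.
set h := (q %/ e)%N; have def_q : (h * e = q)%N := divnK (dvdn_gcdr m q).
have h_gt0 : (0 < h)%N by rewrite divn_gt0 // dvdn_leq // dvdn_gcdr.
rewrite dvdn_divRL // -def_q [(h * e)%N]mulnC dvdn_pmul2l //.
apply: contraT => q0_ndvd_h; exfalso.
have lt_q0 : (gcdn h q0 < q0)%N.
  rewrite ltn_neqAle dvdn_leq ?dvdn_gcdr // andbT.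
  by apply: contraNneq q0_ndvd_h => <-; exact: dvdn_gcdl.
apply: (primitive_char_ker psi_prim (dvdn_gcdr h q0) lt_q0) => a co_a a1.
have [u co_u [u1 ua]] := exists_coprime_crt h_gt0 q0_gt0 q_gt0 co_a a1.
have mu_m : (m * u = m %[mod q])%N.
  have def_m : m = (m %/ e * e)%N by rewrite divnK // dvdn_gcdl.
  rewrite -def_q def_m -mulnA (mulnC e u) -modnMmr -muln_modl u1.
  by rewrite muln_modl modnMmr mul1n.
rewrite -(char_eqmod psi_char ua); apply: (mulIf Tm_neq0).
have Tmu : Tq q f (m * u) = Tq q f m by apply: Tq_eqmod.
by rewrite mul1r [RHS](Tq_twist m co_u) Tmu.
Qed.

Lemma sum_gcdn_eq_Tq d n : (d %| q)%N -> (q0 %| q %/ d)%N ->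
  \sum_(1 <= m < q.+1) (if gcdn m q == d then Tq q f m * ekm R m n q else 0) =
  Tq q f d * gauss_sum (q %/ d) n (conj_fun (induced_char psi (q %/ d))).
Proof.
move=> d_dvd q0_dvd_qd; have d_gt0 : (0 < d)%N := dvdn_gt0 q_gt0 d_dvd.
have gcd_d m : (gcdn m q == d) = (d %| m)%N && coprime (m %/ d) (q %/ d).
  have [d_m | d_nm] := boolP (d %| m)%N; last first.
    by apply: contraNF d_nm => /eqP <-; exact: dvdn_gcdl.
  by rewrite /= /coprime -[in RHS](eqn_pmul2r d_gt0) muln_gcdl !divnK // mul1n.
pose G m := if coprime (m %/ d) (q %/ d) then Tq q f m * ekm R m n q else 0.
rewrite (eq_bigr (fun m => if (d %| m)%N then G m else 0)) => [|m _]; last first.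
  by rewrite gcd_d /G; case: (d %| m)%N.
rewrite -{1}(divnK d_dvd) mulnC sum_dvdn_nat // /gauss_sum mulr_sumr.
apply: eq_bigr => k _; rewrite /G mulKn // /conj_fun /induced_char /principal_char.
case: ifP => co_k; last by rewrite mulr0 conjc0 mul0r mulr0.
rewrite mulr1 mulrA [Tq q f d * _]mulrC -Tq_mul_coprime //.
by rewrite -(ekm_mulr R k n (q %/ d) d_gt0) divnK.
Qed.

End Twisted.

Theorem lemma4p1 (R : realType) (q q0 : nat) (psi : nat -> R[i]) (f : nat -> R[i]) :
  (0 < q)%N -> (q0 %| q)%N ->
  primitive_char q0 psi ->
  periodic_nat q f ->
  in_E q q0 psi f ->
  forall n : nat, (0 < n)%N ->
    f n = \sum_(d <- divisors (q %/ q0))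
            Tq q f d * gauss_sum (q %/ d) n (conj_fun (induced_char psi (q %/ d))).
Proof.
move=> q_gt0 q0_dvd psi_prim f_per f_E n _; have [psi_char _] := psi_prim.
have f_twist := in_E_twisted q_gt0 q0_dvd psi_char f_E.
have qq0_gt0 : (0 < q %/ q0)%N.
  by rewrite divn_gt0 ?(dvdn_gt0 q_gt0 q0_dvd) // dvdn_leq.
rewrite (Tq_inversion q_gt0 f_per n) (eq_bigr (fun m => \sum_(d <- divisors (q %/ q0))
    (if gcdn m q == d then Tq q f m * ekm R m n q else 0))) => [|m _]; last first.
  rewrite sum_if_eq_seq ?divisors_uniq // => gcd_nin.
  rewrite (Tq_eq0 q_gt0 f_per f_twist q0_dvd psi_char psi_prim) ?mul0r //.
  by rewrite dvdn_divisors.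
rewrite exchange_big; apply: eq_big_seq => d.
move=> /(divisors_divnP q_gt0 q0_dvd)[d_dvd q0_dvd_qd].
exact (sum_gcdn_eq_Tq q_gt0 f_per f_twist q0_dvd psi_char n d_dvd q0_dvd_qd).
Qed.
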